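(* Fix an integer $n\geq 3$ and let $\mathcal E/\mathbb{Q}$ be an elliptic curve without complex multiplication. For each prime $p$ of good reduction, let $E/\mathbb{F}_p$ be the reduction of $\mathcal E$ modulo $p$ and set $$\Delta''_{E/\mathbb{F}_p;n}:=\frac{a_{E/\mathbb{F}_p;n}-\big((5-n)+(n-1)a_{E/\mathbb{F}_p}-(n-1)p\big)}{-6/\sqrt p}.$$ Define $\Theta''_{E/\mathbb{F}_p;n}\in[0,\pi]$ by $\cos\Theta''_{E/\mathbb{F}_p;n}=\Delta''_{E/\mathbb{F}_p;n}$ whenever $|\Delta''_{E/\mathbb{F}_p;n}|\leq 1$. Then for all real $0\leq\alpha<\beta\leq\pi$, $$\lim_{N\to\infty}\frac{\#\{p\leq N:\ p \text{ prime of good reduction},\ |\Delta''_{E/\mathbb{F}_p;n}|\le 1,\ \alpha\leq\Theta''_{E/\mathbb{F}_p;n}\leq\beta\}}{\#\{p\leq N:\ p\text{ prime}\}}=\frac{2}{\pi}\int_\alpha^\beta\sin^2\theta\,d\theta.$$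
   Context: For an elliptic curve $E$ over $\mathbb{F}_q$: $a_{E/\mathbb{F}_q}:=q+1-\#E(\mathbb{F}_q)$. For $m\geq 1$, $\beta_{E/\mathbb{F}_q;m}(0):=\sum_{\mathcal V}\frac{1}{\#\mathrm{Aut}(\mathcal V)}$ with $\mathcal V$ running over isomorphism classes of semi-stable vector bundles of rank $m$ and degree $0$ on $E$, and $\beta_{E/\mathbb{F}_q;0}(0):=1$. The rank $n$ $a$-invariant is $a_{E/\mathbb{F}_q;n}:=(q^n+1)-(q^n-1)\frac{\beta_{E/\mathbb{F}_q;n}(0)}{\beta_{E/\mathbb{F}_q;n-1}(0)}$. Known background (Weng–Zagier): $(q^m-1)\beta_{E/\mathbb{F}_q;m}(0)=(q^m+q^{m-1}-a_{E/\mathbb{F}_q})\beta_{E/\mathbb{F}_q;m-1}(0)-(q^{m-1}-q)\beta_{E/\mathbb{F}_q;m-2}(0)$ for $m\ge1$ with $\beta_{E/\mathbb{F}_q;-1}(0):=0$. The classical Sato–Tate law (Taylor et al.) for non-CM $\mathcal E/\mathbb{Q}$ may be used: the angles $\theta_p\in[0,\pi]$ with $\cos\theta_p=a_{E/\mathbb{F}_p}/(2\sqrt p)$ are equidistributed with respect to $\frac{2}{\pi}\sin^2\theta\,d\theta$. *)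

From Stdlib Require Import Reals Lra ZArith Znumtheory List Bool.
From Coquelicot Require Import Coquelicot.
Open Scope R_scope.

(* y^2 + a1 x y + a3 y = x^3 + a2 x^2 + a4 x + a6,  ai in Z. *)
Record weierstrass := Weierstrass { wa1 : Z; wa2 : Z; wa3 : Z; wa4 : Z; wa6 : Z }.

Definition wb2 (E : weierstrass) : Z := (wa1 E * wa1 E + 4 * wa2 E)%Z.
Definition wb4 (E : weierstrass) : Z := (2 * wa4 E + wa1 E * wa3 E)%Z.
Definition wb6 (E : weierstrass) : Z := (wa3 E * wa3 E + 4 * wa6 E)%Z.
Definition wb8 (E : weierstrass) : Z :=
  (wa1 E * wa1 E * wa6 E + 4 * wa2 E * wa6 E - wa1 E * wa3 E * wa4 E
   + wa2 E * wa3 E * wa3 E - wa4 E * wa4 E)%Z.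
Definition wdisc (E : weierstrass) : Z :=
  (- wb2 E * wb2 E * wb8 E - 8 * wb4 E ^ 3 - 27 * wb6 E * wb6 E
   + 9 * wb2 E * wb4 E * wb6 E)%Z.
Definition wc4 (E : weierstrass) : Z := (wb2 E * wb2 E - 24 * wb4 E)%Z.

Definition is_elliptic (E : weierstrass) : Prop := wdisc E <> 0%Z.

(* The j-invariant is j = c4^3 / Delta.  The CM j-invariants over Q are exactly the
   13 rational j-invariants of imaginary quadratic orders of class number one. *)
Definition cm_j_invariants : list Z :=
  (0 :: 1728 :: -3375 :: 8000 :: -32768 :: 54000 :: 287496 :: -884736
     :: -12288000 :: 16581375 :: -884736000 :: -147197952000
     :: -262537412640768000 :: nil)%Z.

Definition no_CM (E : weierstrass) : Prop :=
  forall j0, In j0 cm_j_invariants -> (wc4 E ^ 3 <> j0 * wdisc E)%Z.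

Definition good_prime (E : weierstrass) (p : nat) : bool :=
  (if prime_dec (Z.of_nat p) then true else false)
  && negb (Z.eqb (Z.rem (wdisc E) (Z.of_nat p)) 0).

Definition is_prime_nat (p : nat) : bool :=
  if prime_dec (Z.of_nat p) then true else false.

Definition on_curve_mod (E : weierstrass) (p : Z) (x y : Z) : bool :=
  Z.eqb (Z.modulo (y * y + wa1 E * x * y + wa3 E * y
                   - (x ^ 3 + wa2 E * x * x + wa4 E * x + wa6 E)) p) 0.

(* #E(F_p) = 1 (point at infinity) + number of affine solutions in F_p^2. *)
Definition npoints (E : weierstrass) (p : nat) : nat :=
  1 + length (filter (fun xy : nat * nat =>
                        on_curve_mod E (Z.of_nat p) (Z.of_nat (fst xy)) (Z.of_nat (snd xy)))
                     (list_prod (seq 0 p) (seq 0 p))).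

Definition ap (E : weierstrass) (p : nat) : R := INR p + 1 - INR (npoints E p).

(* beta_pair q a m = (beta_{m-1}(0), beta_m(0)), with beta_{-1} = 0, beta_0 = 1,
   (q^m - 1) beta_m = (q^m + q^{m-1} - a) beta_{m-1} - (q^{m-1} - q) beta_{m-2}. *)
Fixpoint beta_pair (q a : R) (m : nat) : R * R :=
  match m with
  | O => (0, 1)
  | S k => let (b0, b1) := beta_pair q a k in
           (b1, ((q ^ (k + 1) + q ^ k - a) * b1 - (q ^ k - q) * b0) / (q ^ (k + 1) - 1))
  end.

Definition beta (q a : R) (m : nat) : R := snd (beta_pair q a m).

Definition a_rank (q a : R) (n : nat) : R :=
  (q ^ n + 1) - (q ^ n - 1) * beta q a n / beta q a (n - 1).

Definition Delta2 (E : weierstrass) (n p : nat) : R :=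
  (a_rank (INR p) (ap E p) n
     - ((5 - INR n) + (INR n - 1) * ap E p - (INR n - 1) * INR p))
  / (- 6 / sqrt (INR p)).

Definition Theta2 (E : weierstrass) (n p : nat) : R := acos (Delta2 E n p).

Definition Rle_b (x y : R) : bool := if Rle_dec x y then true else false.

Definition prime_count (N : nat) : nat :=
  length (filter is_prime_nat (seq 0 (S N))).

Definition count_Theta2 (E : weierstrass) (n : nat) (alpha beta0 : R) (N : nat) : nat :=
  length (filter (fun p => good_prime E p
                           && Rle_b (Rabs (Delta2 E n p)) 1
                           && Rle_b alpha (Theta2 E n p)
                           && Rle_b (Theta2 E n p) beta0)
                 (seq 0 (S N))).

(* ---------- classical Sato--Tate law for E (background theorem, used as hypothesis) ---------- *)
Definition theta_p (E : weierstrass) (p : nat) : R := acos (ap E p / (2 * sqrt (INR p))).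

Definition count_theta (E : weierstrass) (alpha beta0 : R) (N : nat) : nat :=
  length (filter (fun p => good_prime E p
                           && Rle_b alpha (theta_p E p)
                           && Rle_b (theta_p E p) beta0)
                 (seq 0 (S N))).

Definition sato_tate_law (E : weierstrass) : Prop :=
  forall alpha beta0 : R, 0 <= alpha -> alpha < beta0 -> beta0 <= PI ->
    is_lim_seq (fun N => INR (count_theta E alpha beta0 N) / INR (prime_count N))
               (RInt (fun t => 2 / PI * (sin t) ^ 2) alpha beta0).

(* Write q = p, t = q^(-1/2) and A = a_p t, so that |A| <= 2 is the Hasse range. For the
   normalized ratios y_m = ((q^m - 1) beta_m / beta_(m-1) - q^m) / q one has
   a_{E/F_p;n} = 1 - p y_n, and the Weng-Zagier recursion becomes
     y_(m+1) = (q^(m-1) (y_m + 1 + t^2) - t^2) / (q^(m-1) + y_m) - A t,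
   i.e. y_(m+1) = y_m + 1 + t^2 - A t + O(t^4) for m >= 3. Starting from the exact value of
   y_3 this gives Delta''_{E/F_p;n} = cos theta_p + O_n(p^(-1/2)) when |cos theta_p| <= 1.
   Since acos is uniformly continuous, Theta''_p and theta_p are eventually eta-close, so the
   count over [alpha, beta] is squeezed between Sato-Tate counts over [alpha + eta, beta - eta]
   and over [alpha - eta, beta + eta] plus the windows [0, eta] and [PI - eta, PI]; the latter
   also absorb the primes with |a_p| > 2 sqrt p, whose theta_p is 0 or PI. Let eta -> 0. *)

From Stdlib Require Import Reals Lra Lia Psatz ZArith Znumtheory List Bool.
From Coquelicot Require Import Coquelicot.
Open Scope R_scope.

Definition count_upto (f : nat -> bool) (N : nat) : nat := length (filter f (seq 0 (S N))).

Lemma count_upto_S f N :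
  count_upto f (S N) = (count_upto f N + if f (S N) then 1 else 0)%nat.
Proof.
  unfold count_upto. rewrite (seq_S (S N)), filter_app, length_app. simpl.
  destruct (f (S N)); reflexivity.
Qed.

Lemma count_upto_mono f N M : (N <= M)%nat -> (count_upto f N <= count_upto f M)%nat.
Proof. induction 1; [lia|]. rewrite count_upto_S. lia. Qed.

Lemma count_upto_le_or (f g1 g2 : nat -> bool) N :
  (forall p, f p = true -> g1 p = true \/ g2 p = true) ->
  (count_upto f N <= count_upto g1 N + count_upto g2 N)%nat.
Proof.
  intros H. unfold count_upto. induction (seq 0 (S N)) as [|p l IH]; simpl; [lia|].
  destruct (f p) eqn:Ef; [destruct (H p Ef) as [E|E]; rewrite E|];
    destruct (g1 p), (g2 p); simpl; lia.
Qed.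

Lemma count_upto_lt P0 N : (count_upto (fun p => Nat.ltb p P0) N <= P0)%nat.
Proof.
  unfold count_upto. generalize (S N) as k; intros k.
  enough (length (filter (fun p => Nat.ltb p P0) (seq 0 k)) = Nat.min k P0) by lia.
  induction k as [|k IH]; [reflexivity|].
  rewrite seq_S, filter_app, length_app, IH, Nat.add_0_l. cbn [filter].
  destruct (Nat.ltb_spec k P0); cbn [length]; lia.
Qed.

Lemma Z_prime_divisor_exists (n : Z) : (1 < n)%Z -> exists p, prime p /\ (p | n)%Z.
Proof.
  intros hn. generalize hn.
  apply (Z_lt_induction (fun n => (1 < n)%Z -> exists p, prime p /\ (p | n)%Z)); [|lia].
  intros m IH hm. destruct (prime_dec m) as [hp|hp].
  - exists m. split; [exact hp | apply Z.divide_refl].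
  - destruct (not_prime_divide m hm hp) as [d [hd hdm]].
    destruct (IH d ltac:(lia) ltac:(lia)) as [p [hpp hpd]].
    exists p. split; [exact hpp | eapply Z.divide_trans; eauto].
Qed.

Lemma Nat_divide_fact k m : (1 <= k <= m)%nat -> Nat.divide k (fact m).
Proof.
  induction m as [|m IH]; intros hk; [lia|]. change (fact (S m)) with (S m * fact m)%nat.
  destruct (Nat.eq_dec k (S m)) as [->|hne].
  - apply Nat.divide_factor_l.
  - apply Nat.divide_mul_r, IH. lia.
Qed.

(* Euclid: a prime factor of m! + 1 exceeds m. *)
Lemma prime_gt_exists m : exists p, (m < p)%nat /\ is_prime_nat p = true.
Proof.
  destruct (Z_prime_divisor_exists (Z.of_nat (fact m) + 1)) as [p [hp hpd]].
  { pose proof (lt_O_fact m). lia. }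
  pose proof (prime_ge_2 p hp).
  exists (Z.to_nat p). split.
  - destruct (le_lt_dec (Z.to_nat p) m) as [hle|]; [exfalso|assumption].
    assert (hpf : (p | Z.of_nat (fact m))%Z).
    { destruct (Nat_divide_fact (Z.to_nat p) m ltac:(lia)) as [c hc].
      exists (Z.of_nat c). rewrite hc, Nat2Z.inj_mul, Z2Nat.id by lia. reflexivity. }
    assert (hp1 : (p | 1)%Z).
    { replace 1%Z with (Z.of_nat (fact m) + 1 - Z.of_nat (fact m))%Z by ring.
      apply Z.divide_sub_r; assumption. }
    apply Z.divide_1_r in hp1. lia.
  - unfold is_prime_nat. rewrite Z2Nat.id by lia. destruct (prime_dec p); tauto.
Qed.

Lemma prime_count_infty : is_lim_seq (fun N => INR (prime_count N)) p_infty.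
Proof.
  assert (unbounded : forall k, exists N, (k <= prime_count N)%nat).
  { induction k as [|k [N hN]]; [exists 0%nat; lia|].
    destruct (prime_gt_exists N) as [[|p] [hNp hp]]; [lia|].
    exists (S p). change (prime_count (S p)) with (count_upto is_prime_nat (S p)).
    rewrite count_upto_S, hp.
    pose proof (count_upto_mono is_prime_nat N p ltac:(lia)).
    change (prime_count N) with (count_upto is_prime_nat N) in hN. lia. }
  apply is_lim_seq_spec. intros M.
  destruct (INR_unbounded M) as [k hk]. destruct (unbounded k) as [N0 hN0].
  exists N0. intros N hN.
  apply (Rlt_le_trans _ (INR k)); [lra|]. apply le_INR.
  eapply Nat.le_trans; [exact hN0|]. apply (count_upto_mono is_prime_nat). exact hN.
Qed.

Lemma is_lim_seq_squeeze_approx (u : nat -> R) (l : R) :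
  (forall eps, 0 < eps -> exists (v w : nat -> R) (lv lw : R),
     is_lim_seq v lv /\ is_lim_seq w lw /\ l - eps <= lv /\ lw <= l + eps /\
     eventually (fun N => v N <= u N <= w N)) ->
  is_lim_seq u l.
Proof.
  intros H. apply is_lim_seq_spec. intros eps.
  assert (he : 0 < eps / 2) by (destruct eps; simpl; lra).
  destruct (H _ he) as (v & w & lv & lw & hv & hw & hlv & hlw & hvw).
  apply is_lim_seq_spec in hv, hw.
  generalize (filter_and _ _ hvw (filter_and _ _ (hv (mkposreal _ he)) (hw (mkposreal _ he)))).
  apply filter_imp. simpl. intros N [[h1 h2] [h3 h4]].
  apply Rabs_lt_between in h3, h4. apply Rabs_lt_between. lra.
Qed.

Lemma is_lim_seq_div_p_infty (k : R) (d : nat -> R) :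
  is_lim_seq d p_infty -> is_lim_seq (fun N => k / d N) 0.
Proof.
  intros hd. replace (Finite 0) with (Rbar_mult k (Rbar_inv p_infty)) by (simpl; f_equal; ring).
  apply is_lim_seq_scal_l, is_lim_seq_inv; [exact hd | discriminate].
Qed.

Definition sato_tate_density (t : R) : R := 2 / PI * sin t ^ 2.

Lemma ex_RInt_sato_tate_density a b : ex_RInt sato_tate_density a b.
Proof.
  apply (@ex_RInt_continuous R_CompleteNormedModule). intros z _.
  apply continuity_pt_filterlim. unfold sato_tate_density. reg.
Qed.

Lemma sato_tate_density_bounds t : 0 <= sato_tate_density t <= 1.
Proof.
  unfold sato_tate_density. pose proof PI_RGT_0. pose proof PI2_3_2. pose proof (SIN_bound t).
  assert (0 < 2 / PI <= 1).
  { split; [apply Rdiv_lt_0_compat; lra|].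
    apply (Rmult_le_reg_r PI); [lra|]. unfold Rdiv. rewrite Rmult_assoc, Rinv_l; lra. }
  assert (0 <= sin t ^ 2 <= 1) by (simpl; nra).
  nra.
Qed.

Lemma RInt_sato_tate_density_bounds a b :
  a <= b -> 0 <= RInt sato_tate_density a b <= b - a.
Proof.
  intros hab. split.
  - apply RInt_ge_0; [exact hab | apply ex_RInt_sato_tate_density |].
    intros t _. apply sato_tate_density_bounds.
  - eapply Rle_trans; [apply Rle_abs|]. rewrite <- (Rmult_1_r (b - a)).
    apply abs_RInt_le_const; [exact hab | apply ex_RInt_sato_tate_density |].
    intros t _. rewrite Rabs_pos_eq; apply sato_tate_density_bounds.
Qed.

Lemma RInt_sato_tate_density_widen a' a b b' : a' <= a -> a <= b -> b <= b' ->
  RInt sato_tate_density a b <= RInt sato_tate_density a' b' <=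
  RInt sato_tate_density a b + (a - a') + (b' - b).
Proof.
  intros h1 h2 h3.
  rewrite <- (RInt_Chasles _ a' a b'), <- (RInt_Chasles _ a b b');
    try apply ex_RInt_sato_tate_density.
  change plus with Rplus.
  pose proof (RInt_sato_tate_density_bounds a' a h1).
  pose proof (RInt_sato_tate_density_bounds b b' h3). lra.
Qed.

Lemma acos_ge_1 x : 1 <= x -> acos x = 0.
Proof. intros h. unfold acos. destruct (Rle_dec x (-1)); [lra|]. destruct (Rle_dec 1 x); lra. Qed.

Lemma acos_le_m1 x : x <= -1 -> acos x = PI.
Proof. intros h. unfold acos. destruct (Rle_dec x (-1)); lra. Qed.

Lemma acos_interior x : 0 < acos x < PI -> -1 < x < 1.
Proof.
  intros h. destruct (Rle_dec 1 x) as [h1|h1]; [rewrite acos_ge_1 in h; lra|].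
  destruct (Rle_dec x (-1)) as [h2|h2]; [rewrite acos_le_m1 in h; lra|]. lra.
Qed.

Lemma cos_acos_le x : acos x < PI -> cos (acos x) <= x.
Proof.
  intros h. destruct (Rle_dec 1 x) as [h1|h1]; [rewrite acos_ge_1, cos_0; lra|].
  destruct (Rle_dec x (-1)) as [h2|h2]; [rewrite acos_le_m1 in h; lra|].
  rewrite cos_acos; lra.
Qed.

Lemma cos_acos_ge x : 0 < acos x -> x <= cos (acos x).
Proof.
  intros h. destruct (Rle_dec x (-1)) as [h1|h1]; [rewrite acos_le_m1, cos_PI; lra|].
  destruct (Rle_dec 1 x) as [h2|h2]; [rewrite acos_ge_1 in h; lra|].
  rewrite cos_acos; lra.
Qed.

Lemma cos_antitone x y : 0 <= x -> x <= y -> y <= PI -> cos y <= cos x.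
Proof.
  intros h1 h2 h3. destruct (Req_dec x y) as [->|hne]; [lra|].
  left. apply cos_decreasing_1; lra.
Qed.

(* With c = cos th and C = cos eta, the claim is sin th sin eta >= (1 - c) (1 - C);
   squaring, it reduces to c + C >= 0, i.e. th <= PI - eta. *)
Lemma cos_sub_cos_shift th eta : 0 <= th -> 0 <= eta -> th + eta <= PI ->
  1 - cos eta <= cos th - cos (th + eta).
Proof.
  intros h1 h2 h3. rewrite cos_plus.
  assert (hcC : - cos eta <= cos th).
  { rewrite <- Rtrigo_facts.cos_pi_minus. apply cos_antitone; lra. }
  pose proof (sin_ge_0 th h1 ltac:(lra)). pose proof (sin_ge_0 eta h2 ltac:(lra)).
  pose proof (COS_bound th). pose proof (COS_bound eta).
  assert (hsq : (sin th * sin eta) ^ 2 - ((1 - cos th) * (1 - cos eta)) ^ 2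
                = 2 * ((1 - cos th) * (1 - cos eta)) * (cos th + cos eta)).
  { replace ((sin th * sin eta) ^ 2) with ((sin th)² * (sin eta)²) by (unfold Rsqr; ring).
    rewrite !sin2. unfold Rsqr. ring. }
  assert (0 <= (1 - cos th) * (1 - cos eta)) by nra.
  assert (0 <= 2 * ((1 - cos th) * (1 - cos eta)) * (cos th + cos eta)) by nra.
  destruct (Rle_dec ((1 - cos th) * (1 - cos eta)) (sin th * sin eta)) as [hle|hlt]; [lra|].
  assert (0 < ((1 - cos th) * (1 - cos eta) - sin th * sin eta)
              * ((1 - cos th) * (1 - cos eta) + sin th * sin eta))
    by (apply Rmult_lt_0_compat; nra).
  nra.
Qed.

Lemma acos_uniform_continuity eta x y : 0 < eta <= PI ->
  Rabs (x - y) <= 1 - cos eta -> Rabs (acos x - acos y) <= eta.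
Proof.
  intros he hxy.
  assert (key : forall u v, Rabs (u - v) <= 1 - cos eta -> acos v - acos u <= eta).
  { intros u v huv. destruct (Rle_dec (acos v - acos u) eta) as [|hgt]; [assumption|exfalso].
    pose proof (acos_bound u). pose proof (acos_bound v).
    assert (cos (acos v) < cos (acos u + eta)) by (apply cos_decreasing_1; lra).
    pose proof (cos_sub_cos_shift (acos u) eta ltac:(lra) ltac:(lra) ltac:(lra)).
    pose proof (cos_acos_le u ltac:(lra)). pose proof (cos_acos_ge v ltac:(lra)).
    apply Rabs_le_between in huv. lra. }
  apply Rabs_le_between. split.
  - pose proof (key x y hxy). lra.
  - apply key. rewrite Rabs_minus_sym. exact hxy.
Qed.

Lemma Rle_b_spec x y : Rle_b x y = true <-> x <= y.
Proof. unfold Rle_b. destruct (Rle_dec x y); split; congruence || tauto. Qed.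

(* count_theta E is acos_count (good_prime E) (fun p => ap E p / (2 * sqrt (INR p))) and
   count_Theta2 E n is acos_count_defined (good_prime E) (Delta2 E n), up to conversion. *)
Definition acos_window (good : nat -> bool) (x : nat -> R) (a b : R) (p : nat) : bool :=
  good p && Rle_b a (acos (x p)) && Rle_b (acos (x p)) b.

Definition acos_count (good : nat -> bool) (x : nat -> R) (a b : R) : nat -> nat :=
  count_upto (acos_window good x a b).

Definition acos_count_defined (good : nat -> bool) (x : nat -> R) (a b : R) : nat -> nat :=
  count_upto (fun p => good p && Rle_b (Rabs (x p)) 1
                       && Rle_b a (acos (x p)) && Rle_b (acos (x p)) b).

Section AcosPerturbation.

Variables (good : nat -> bool) (c D : nat -> R).

Section Counting.

Variables (P0 : nat) (alpha beta eta : R).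
Hypotheses (ha : 0 <= alpha) (hb : beta <= PI) (he : 0 < eta).

Lemma acos_count_defined_lower N :
  (forall p, (P0 <= p)%nat -> good p = true -> Rabs (c p) <= 1 ->
     Rabs (acos (D p) - acos (c p)) <= eta / 2) ->
  (acos_count good c (alpha + eta) (beta - eta) N
   <= P0 + acos_count_defined good D alpha beta N)%nat.
Proof.
  intros hclose. pose proof (count_upto_lt P0 N).
  apply Nat.le_trans
    with (count_upto (fun p => Nat.ltb p P0) N + acos_count_defined good D alpha beta N)%nat;
    [apply count_upto_le_or | lia].
  intros p hp. destruct (Nat.ltb_spec p P0) as [|hP]; [left; reflexivity|right].
  unfold acos_window in hp. rewrite !andb_true_iff, !Rle_b_spec in *. destruct hp as [[hg h1] h2].
  pose proof (acos_interior (c p) ltac:(lra)).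
  pose proof (hclose p hP hg ltac:(apply Rabs_le; lra)) as hD. apply Rabs_le_between in hD.
  pose proof (acos_interior (D p) ltac:(lra)).
  repeat split; [exact hg | apply Rabs_le | |]; lra.
Qed.

Lemma acos_count_defined_upper N :
  (forall p, (P0 <= p)%nat -> good p = true -> Rabs (c p) <= 1 ->
     Rabs (acos (D p) - acos (c p)) <= eta) ->
  (acos_count_defined good D alpha beta N <=
   P0 + (acos_count good c (Rmax 0 (alpha - eta)) (Rmin PI (beta + eta)) N
         + (acos_count good c 0 eta N + acos_count good c (PI - eta) PI N)))%nat.
Proof.
  intros hclose.
  set (g := acos_window good c).
  set (a' := Rmax 0 (alpha - eta)). set (b' := Rmin PI (beta + eta)).
  pose proof (count_upto_lt P0 N).
  pose proof (count_upto_le_or (fun p => g a' b' p || (g 0 eta p || g (PI - eta) PI p))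
                (g a' b') _ N (fun p h => proj1 (orb_true_iff _ _) h)).
  pose proof (count_upto_le_or (fun p => g 0 eta p || g (PI - eta) PI p)
                (g 0 eta) (g (PI - eta) PI) N (fun p h => proj1 (orb_true_iff _ _) h)).
  enough (acos_count_defined good D alpha beta N <= count_upto (fun p => Nat.ltb p P0) N
            + count_upto (fun p => g a' b' p || (g 0%R eta p || g (PI - eta)%R PI p)) N)%nat
    by (unfold acos_count; fold g; clearbody g a' b'; lia).
  apply count_upto_le_or. intros p hp.
  destruct (Nat.ltb_spec p P0) as [|hP]; [left; reflexivity|right].
  unfold g, acos_window. rewrite !orb_true_iff, !andb_true_iff, !Rle_b_spec in *.
  destruct hp as [[[hg hD1] h1] h2]. pose proof (acos_bound (c p)).
  destruct (Rle_dec (Rabs (c p)) 1) as [hc|hc].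
  - left. pose proof (hclose p hP hg hc) as hD. apply Rabs_le_between in hD.
    split; [split; [exact hg|] |]; [apply Rmax_lub | apply Rmin_glb]; lra.
  - right. unfold Rabs in hc. destruct (Rcase_abs (c p)).
    + right. rewrite acos_le_m1 by lra. repeat split; [exact hg | lra | lra].
    + left. rewrite acos_ge_1 by lra. repeat split; [exact hg | lra | lra].
Qed.

End Counting.

Variable den : nat -> R.
Hypothesis den_p_infty : is_lim_seq den p_infty.
Hypothesis c_equidistributed : forall a b, 0 <= a -> a < b -> b <= PI ->
  is_lim_seq (fun N => INR (acos_count good c a b N) / den N) (RInt sato_tate_density a b).
Hypothesis D_near_c : forall h, 0 < h -> exists P0, forall p, (P0 <= p)%nat ->
  Rabs (c p) <= 1 -> Rabs (D p - c p) <= h.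

Theorem acos_count_defined_equidistributed alpha beta : 0 <= alpha -> alpha < beta -> beta <= PI ->
  is_lim_seq (fun N => INR (acos_count_defined good D alpha beta N) / den N)
             (RInt sato_tate_density alpha beta).
Proof.
  intros ha hab hb. apply is_lim_seq_squeeze_approx. intros eps heps.
  set (eta := Rmin ((beta - alpha) / 4) (eps / 4)).
  assert (he : 0 < eta) by (apply Rmin_glb_lt; lra).
  assert (he1 : eta <= (beta - alpha) / 4) by apply Rmin_l.
  assert (he2 : eta <= eps / 4) by apply Rmin_r.
  assert (hh : 0 < 1 - cos (eta / 2)).
  { rewrite <- cos_0 at 1. assert (cos (eta / 2) < cos 0) by (apply cos_decreasing_1; lra). lra. }
  destruct (D_near_c _ hh) as [P0 hP0].
  assert (hclose : forall p, (P0 <= p)%nat -> good p = true -> Rabs (c p) <= 1 ->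
                     Rabs (acos (D p) - acos (c p)) <= eta / 2)
    by (intros p hp _ hc; apply acos_uniform_continuity; [lra | auto]).
  set (a' := Rmax 0 (alpha - eta)). set (b' := Rmin PI (beta + eta)).
  assert (ha' : alpha - eta <= a' <= alpha) by (split; [apply Rmax_r | apply Rmax_lub; lra]).
  assert (hb' : beta <= b' <= beta + eta) by (split; [apply Rmin_glb; lra | apply Rmin_r]).
  assert (ha'0 : 0 <= a') by apply Rmax_l. assert (hb'PI : b' <= PI) by apply Rmin_l.
  set (r a b N := INR (acos_count good c a b N) / den N).
  exists (fun N => r (alpha + eta) (beta - eta) N - INR P0 / den N),
         (fun N => INR P0 / den N + (r a' b' N + (r 0 eta N + r (PI - eta) PI N))).
  exists (RInt sato_tate_density (alpha + eta) (beta - eta) - 0),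
         (0 + (RInt sato_tate_density a' b' + (RInt sato_tate_density 0 eta
               + RInt sato_tate_density (PI - eta) PI))).
  pose proof (RInt_sato_tate_density_widen alpha (alpha + eta) (beta - eta) beta).
  pose proof (RInt_sato_tate_density_widen a' alpha beta b').
  pose proof (RInt_sato_tate_density_bounds 0 eta).
  pose proof (RInt_sato_tate_density_bounds (PI - eta) PI).
  repeat split; try lra.
  - apply is_lim_seq_minus'; [apply c_equidistributed; lra | now apply is_lim_seq_div_p_infty].
  - apply is_lim_seq_plus'; [now apply is_lim_seq_div_p_infty|].
    repeat apply is_lim_seq_plus'; apply c_equidistributed; lra.
  - generalize (proj2 (is_lim_seq_spec den p_infty) den_p_infty 0). apply filter_imp.
    intros N hN. assert (hinv : 0 < / den N) by (apply Rinv_0_lt_compat; exact hN).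
    assert (hclose' : forall p, (P0 <= p)%nat -> good p = true -> Rabs (c p) <= 1 ->
                        Rabs (acos (D p) - acos (c p)) <= eta).
    { intros p h1 h2 h3. pose proof (hclose p h1 h2 h3). lra. }
    pose proof (le_INR _ _ (acos_count_defined_lower P0 alpha beta eta ha hb he N hclose)) as hlow.
    pose proof (le_INR _ _ (acos_count_defined_upper P0 alpha beta eta he N hclose')) as hupp.
    rewrite plus_INR in hlow. rewrite !plus_INR in hupp. fold a' b' in hupp.
    unfold r, Rdiv. split; nra.
Qed.

End AcosPerturbation.

Lemma beta_1 q a : beta q a 1 = (q + 1 - a) / (q - 1).
Proof. unfold beta. simpl. unfold Rdiv. f_equal; [ring | f_equal; ring]. Qed.

Lemma beta_SS q a k : beta q a (S (S k)) =
  ((q ^ S (S k) + q ^ S k - a) * beta q a (S k) - (q ^ S k - q) * beta q a k)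
  / (q ^ S (S k) - 1).
Proof.
  unfold beta. cbn [beta_pair]. destruct (beta_pair q a k) as [b0 b1]. cbn [fst snd].
  rewrite !Nat.add_1_r. reflexivity.
Qed.

Lemma Rabs_div_le N D M : 0 < D -> Rabs N <= M * D -> Rabs (N / D) <= M.
Proof.
  intros hD h. unfold Rdiv. rewrite Rabs_mult, Rabs_inv, (Rabs_pos_eq D) by lra.
  apply (Rmult_le_reg_r D); [exact hD|]. rewrite Rmult_assoc, Rinv_l; lra.
Qed.

Definition ratio_dev (q a : R) (m : nat) : R :=
  ((q ^ m - 1) * beta q a m / beta q a (m - 1) - q ^ m) / q.

Lemma a_rank_ratio_dev q a n : q <> 0 -> a_rank q a n = 1 - q * ratio_dev q a n.
Proof.
  intros hq. unfold a_rank, ratio_dev.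
  set (X := (q ^ n - 1) * beta q a n / beta q a (n - 1)). field. exact hq.
Qed.

Lemma ratio_dev_add_pow q a m : q <> 0 ->
  q * (ratio_dev q a (S m) + q ^ m) = (q ^ S m - 1) * beta q a (S m) / beta q a m.
Proof.
  intros hq. unfold ratio_dev. rewrite Nat.sub_succ, Nat.sub_0_r.
  set (X := (q ^ S m - 1) * beta q a (S m) / beta q a m). simpl. field. exact hq.
Qed.

Lemma ratio_dev_SS q a k : q <> 0 -> q ^ S k <> 1 -> q ^ S (S k) <> 1 ->
  beta q a k <> 0 -> beta q a (S k) <> 0 ->
  ratio_dev q a (S (S k)) =
  (q ^ k * (ratio_dev q a (S k) + 1 + / q) - / q) / (q ^ k + ratio_dev q a (S k)) - a / q.
Proof.
  intros hq h1 h2 b0 b1.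
  assert (hy : q ^ k + ratio_dev q a (S k) <> 0).
  { intros h0. pose proof (ratio_dev_add_pow q a k hq) as E.
    rewrite Rplus_comm, h0, Rmult_0_r in E. symmetry in E. revert E. unfold Rdiv.
    repeat apply Rmult_integral_contrapositive_currified; try apply Rinv_neq_0_compat;
      [lra | exact b1 | exact b0]. }
  revert hy. unfold ratio_dev. rewrite beta_SS, !Nat.sub_succ, !Nat.sub_0_r.
  set (B0 := beta q a k). set (B1 := beta q a (S k)). simpl. set (Q := q ^ k).
  intros hy.
  replace (Q + ((q * Q - 1) * B1 / B0 - q * Q) / q)
    with (((q * Q - 1) * B1) / (B0 * q)) in hy by (field; auto).
  field. repeat split; try assumption.
  - replace (Q * (B0 * q) + ((q * Q - 1) * B1 - q * Q * B0)) with ((q * Q - 1) * B1) by ring.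
    intros h0. apply hy. rewrite h0. unfold Rdiv. ring.
  - intros h0. apply h2. simpl. fold Q. lra.
Qed.

Lemma beta_S_neq0 q a m : q <> 0 -> ratio_dev q a (S m) + q ^ m <> 0 -> beta q a (S m) <> 0.
Proof.
  intros hq hy hb. apply hy. apply (Rmult_eq_reg_l q); [|exact hq].
  rewrite ratio_dev_add_pow, hb by exact hq. unfold Rdiv. ring.
Qed.

Lemma ratio_dev_2 q a : q <> 0 -> q - 1 <> 0 -> q ^ 2 - 1 <> 0 -> q + 1 - a <> 0 ->
  ratio_dev q a 2 = 1 - a / q.
Proof.
  intros hq h1 h2 h3. unfold ratio_dev. simpl (2 - 1)%nat.
  rewrite beta_SS, beta_1. change (beta q a 0) with 1. field. auto.
Qed.

Lemma ratio_dev_increment_estimate y Q t A nn : 0 < t <= 1 -> 1 <= nn -> Rabs y <= nn ->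
  1 <= Q * t ^ 4 -> 2 * nn <= Q ->
  Rabs ((Q * (y + 1 + t ^ 2) - t ^ 2) / (Q + y) - A * t - (y + 1 + t ^ 2 - A * t))
  <= 2 * (nn + 1) ^ 2 * t ^ 4.
Proof.
  intros [ht0 ht1] hnn hy hQ hQn. apply Rabs_le_between in hy as [hy1 hy2].
  replace ((Q * (y + 1 + t ^ 2) - t ^ 2) / (Q + y) - A * t - (y + 1 + t ^ 2 - A * t))
    with (- (t ^ 2 + y * (y + 1 + t ^ 2)) / (Q + y)) by (field; lra).
  assert (ht2 : 0 < t ^ 2) by (apply pow_lt; lra).
  assert (ht2' : t ^ 2 <= 1) by (simpl; nra).
  assert (ht4 : 0 < t ^ 4) by (apply pow_lt; lra).
  assert (hnum : Rabs (- (t ^ 2 + y * (y + 1 + t ^ 2))) <= (nn + 1) ^ 2)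
    by (apply Rabs_le; split; nra).
  apply Rabs_div_le; [lra|].
  assert (hden : 1 <= 2 * t ^ 4 * (Q + y)) by nra.
  assert ((nn + 1) ^ 2 * 1 <= (nn + 1) ^ 2 * (2 * t ^ 4 * (Q + y)))
    by (apply Rmult_le_compat_l; [nra | exact hden]).
  lra.
Qed.

Lemma INR_ge_3 n : (3 <= n)%nat -> 3 <= INR n.
Proof. intros hn. replace 3 with (INR 3) by (simpl; ring). apply le_INR, hn. Qed.

(* The expansion of ratio_dev in t = q^(-1/2), A = a t: it grows by 1 + t^2 - A t per step,
   and its t^2 and t^3 terms come from the exact value at m = 3. *)
Definition ratio_dev_model (m : nat) (t A : R) : R :=
  (INR m - 1) + (INR m - 4) * t ^ 2 - (INR m - 1) * A * t + 3 * A * t ^ 3.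

Lemma ratio_dev_model_S m t A :
  ratio_dev_model (S m) t A = ratio_dev_model m t A + 1 + t ^ 2 - A * t.
Proof. unfold ratio_dev_model. rewrite S_INR. ring. Qed.

Definition ratio_dev_error (n m : nat) (t : R) : R :=
  (10 + (INR m - 3) * (2 * (INR n + 1) ^ 2)) * t ^ 4.

Section RatioDevExpansion.

Variables (n : nat) (t A : R).
Hypotheses (hn : (3 <= n)%nat) (ht : 0 < t) (ht_small : 100 * (INR n + 2) ^ 2 * t <= 1)
  (hA : Rabs A <= 2).

Let q := / t ^ 2.
Let a := A / t.

Lemma nt_small : INR n * t <= 1 / 100 /\ t <= 1 / 100.
Proof. pose proof (INR_ge_3 n hn). split; nra. Qed.

Lemma q_mul_t2 : q * t ^ 2 = 1.
Proof. unfold q. field. lra. Qed.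

Lemma inv_q : / q = t ^ 2.
Proof. unfold q. rewrite Rinv_inv. reflexivity. Qed.

Lemma a_div_q : a / q = A * t.
Proof. unfold a, q. field. lra. Qed.

Lemma q_gt_1 : 1 < q.
Proof.
  pose proof q_mul_t2. destruct nt_small as [_ ht1].
  assert (t ^ 2 < 1) by (simpl; nra). assert (0 < t ^ 2) by (apply pow_lt; lra). nra.
Qed.

Lemma model_near_linear m : (3 <= m <= n)%nat ->
  Rabs (ratio_dev_model m t A - (INR m - 1)) <= 1 / 4.
Proof.
  intros hm. destruct nt_small as [hnt ht1]. apply Rabs_le_between in hA as [hA1 hA2].
  assert (3 <= INR m <= INR n) by (split; [apply INR_ge_3 | apply le_INR]; lia).
  assert (ht2 : 0 < t * t <= t / 100) by (split; nra).
  assert (h1 : - INR n * (t * t) <= (INR m - 4) * (t * t) <= INR n * (t * t)) by (split; nra).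
  assert (hs : 0 <= (INR m - 1) * t <= INR n * t) by (split; nra).
  assert (h2 : - 2 * (INR n * t) <= (INR m - 1) * A * t <= 2 * (INR n * t)).
  { replace ((INR m - 1) * A * t) with (A * ((INR m - 1) * t)) by ring. split; nra. }
  assert (h3 : - 6 * (t * t) <= 3 * A * (t * (t * t)) <= 6 * (t * t)) by (split; nra).
  unfold ratio_dev_model. apply Rabs_le. simpl. rewrite !Rmult_1_r. split; nra.
Qed.

Lemma ratio_dev_error_small m : (m <= n)%nat -> ratio_dev_error n m t <= 1 / 4.
Proof.
  intros hm. destruct nt_small as [hnt ht1]. pose proof (INR_ge_3 n hn).
  assert (INR m <= INR n) by (apply le_INR; exact hm).
  assert (ht4 : 0 <= t ^ 4 <= (1 / 100) ^ 4) by (split; [apply pow_le | apply pow_incr]; lra).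
  assert (hc : 0 <= 2 * (INR n + 1) ^ 2 * t ^ 4) by nra.
  assert (h1 : (INR m - 3) * (2 * (INR n + 1) ^ 2) * t ^ 4
               <= INR n * (2 * (INR n + 1) ^ 2 * t ^ 4)) by nra.
  assert (h2 : 0 <= (INR n + 1) * t <= 2 / 100) by (split; nra).
  assert (h3 : INR n * (2 * (INR n + 1) ^ 2 * t ^ 4)
               = 2 * (INR n * t) * ((INR n + 1) * t) ^ 2 * t) by ring.
  assert (h5 : 2 * (INR n * t) * ((INR n + 1) * t) ^ 2 * t <= 1 / 100).
  { assert (0 <= INR n * t) by nra. assert (((INR n + 1) * t) ^ 2 <= 1) by nra. nra. }
  unfold ratio_dev_error. nra.
Qed.

(* The general step loses O(t^2) at m = 2, where q^(m-1) is only q, hence this exact base case. *)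
Lemma ratio_dev_3 :
  beta q a 2 <> 0 /\ Rabs (ratio_dev q a 3 - ratio_dev_model 3 t A) <= 10 * t ^ 4.
Proof.
  destruct nt_small as [_ ht1]. pose proof q_gt_1. pose proof q_mul_t2.
  apply Rabs_le_between in hA as [hA1 hA2].
  assert (hAt : - (1 / 50) <= A * t <= 1 / 50) by (split; nra).
  assert (haq : a = A * t * q) by (rewrite <- a_div_q; field; lra).
  assert (hb1 : beta q a 1 <> 0).
  { rewrite beta_1, haq. apply Rgt_not_eq, Rdiv_lt_0_compat; nra. }
  assert (hy2 : ratio_dev q a 2 = 1 - A * t).
  { rewrite ratio_dev_2, a_div_q; [reflexivity|..]; apply Rgt_not_eq; try rewrite haq; simpl; nra. }
  assert (hb2 : beta q a 2 <> 0).
  { apply beta_S_neq0; [lra|]. rewrite hy2. apply Rgt_not_eq. simpl. lra. }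
  split; [exact hb2|].
  rewrite ratio_dev_SS, hy2, inv_q, a_div_q by first [assumption | apply Rgt_not_eq; simpl; nra].
  replace ((q ^ 1 * (1 - A * t + 1 + t ^ 2) - t ^ 2) / (q ^ 1 + (1 - A * t)) - A * t
           - ratio_dev_model 3 t A)
    with (t ^ 4 * (- A ^ 2 - 4 * A * t + 3 * A ^ 2 * t ^ 2) / (1 + t ^ 2 - A * t ^ 3)).
  2:{ unfold ratio_dev_model, q. simpl INR. field. split; [lra|].
      assert (0 < (1 - A * t) * t ^ 2) by (apply Rmult_lt_0_compat; [lra | apply pow_lt; lra]).
      lra. }
  assert (ht4 : 0 < t ^ 4) by (apply pow_lt; lra).
  assert (hden : 1 / 2 <= 1 + t ^ 2 - A * t ^ 3) by (simpl; nra).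
  assert (hnum : Rabs (- A ^ 2 - 4 * A * t + 3 * A ^ 2 * t ^ 2) <= 5)
    by (apply Rabs_le; split; nra).
  apply Rabs_div_le; [lra|]. rewrite Rabs_mult, (Rabs_pos_eq (t ^ 4)) by lra. nra.
Qed.

Lemma ratio_dev_bounded m y : (3 <= m)%nat -> (m < n)%nat ->
  Rabs (y - ratio_dev_model m t A) <= ratio_dev_error n m t -> Rabs y <= INR n.
Proof.
  intros hm3 hmn hy.
  pose proof (model_near_linear m ltac:(lia)) as hT.
  pose proof (ratio_dev_error_small m ltac:(lia)).
  assert (INR m + 1 <= INR n) by (rewrite <- S_INR; apply le_INR; lia).
  pose proof (INR_ge_3 m hm3). apply Rabs_le_between in hy, hT. apply Rabs_le. lra.
Qed.

Lemma pow_q_large k : (1 <= k)%nat -> 1 <= q ^ S k * t ^ 4 /\ 2 * INR n <= q ^ S k.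
Proof.
  intros hk. pose proof q_gt_1. destruct nt_small as [hnt ht1].
  assert (hQ : q ^ 2 <= q ^ S k) by (apply Rle_pow; [lra | lia]).
  set (Q := q ^ S k) in *.
  assert (hq2 : q ^ 2 * t ^ 4 = 1).
  { replace (q ^ 2 * t ^ 4) with ((q * t ^ 2) ^ 2) by ring. rewrite q_mul_t2. ring. }
  assert (ht4 : 0 < t ^ 4) by (apply pow_lt; lra).
  assert (hQt : 1 <= Q * t ^ 4) by (rewrite <- hq2; apply Rmult_le_compat_r; lra).
  split; [exact hQt|].
  apply (Rmult_le_reg_r (t ^ 4)); [exact ht4|].
  assert (t ^ 3 <= 1) by (rewrite <- (pow1 3); apply pow_incr; lra).
  assert (2 * INR n * t ^ 4 = 2 * (INR n * t) * t ^ 3) by ring.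
  pose proof (pos_INR n). assert (0 <= INR n * t) by nra. nra.
Qed.

Lemma ratio_dev_step m : (3 <= m)%nat -> (m < n)%nat -> beta q a (m - 1) <> 0 ->
  Rabs (ratio_dev q a m - ratio_dev_model m t A) <= ratio_dev_error n m t ->
  beta q a m <> 0 /\
  Rabs (ratio_dev q a (S m) - ratio_dev_model (S m) t A) <= ratio_dev_error n (S m) t.
Proof.
  intros hm3 hmn hb hy. pose proof (ratio_dev_bounded m _ hm3 hmn hy) as hy_n.
  destruct m as [|[|k]]; [lia|lia|]. rewrite Nat.sub_succ, Nat.sub_0_r in hb.
  destruct (pow_q_large k ltac:(lia)) as [hQt hQn].
  pose proof q_gt_1. pose proof (INR_ge_3 n hn).
  set (y := ratio_dev q a (S (S k))) in *. set (Q := q ^ S k) in *.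
  apply Rabs_le_between in hy_n as hy_n'.
  assert (hbS : beta q a (S (S k)) <> 0).
  { apply beta_S_neq0; [lra|]. fold y Q. apply Rgt_not_eq. lra. }
  split; [exact hbS|].
  rewrite ratio_dev_SS, inv_q, a_div_q, ratio_dev_model_S
    by first [assumption | apply Rgt_not_eq, Rlt_pow_R1; [lra | lia] | lra].
  fold y Q.
  replace ((Q * (y + 1 + t ^ 2) - t ^ 2) / (Q + y) - A * t
           - (ratio_dev_model (S (S k)) t A + 1 + t ^ 2 - A * t))
    with (((Q * (y + 1 + t ^ 2) - t ^ 2) / (Q + y) - A * t - (y + 1 + t ^ 2 - A * t))
          + (y - ratio_dev_model (S (S k)) t A)) by ring.
  eapply Rle_trans; [apply Rabs_triang|].
  replace (ratio_dev_error n (S (S (S k))) t)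
    with (2 * (INR n + 1) ^ 2 * t ^ 4 + ratio_dev_error n (S (S k)) t)
    by (unfold ratio_dev_error; rewrite (S_INR (S (S k))); ring).
  apply Rplus_le_compat; [|exact hy].
  destruct nt_small as [_ ht1].
  apply ratio_dev_increment_estimate; [lra | lra | exact hy_n | exact hQt | exact hQn].
Qed.

Lemma ratio_dev_expansion m : (3 <= m <= n)%nat ->
  beta q a (m - 1) <> 0 /\ Rabs (ratio_dev q a m - ratio_dev_model m t A) <= ratio_dev_error n m t.
Proof.
  induction m as [|m IH]; intros hm; [lia|].
  destruct (Nat.eq_dec m 2) as [->|hm2].
  - replace (ratio_dev_error n 3 t) with (10 * t ^ 4) by (unfold ratio_dev_error; simpl; ring).
    exact ratio_dev_3.
  - destruct IH as [hb hy]; [lia|].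
    rewrite Nat.sub_succ, Nat.sub_0_r. apply ratio_dev_step; [lia | lia | exact hb | exact hy].
Qed.

End RatioDevExpansion.

Definition Delta2_error_const (n : nat) : R := (10 + (INR n - 3) * (2 * (INR n + 1) ^ 2)) / 6.

Lemma normalized_a_rank_expansion n q a :
  (3 <= n)%nat -> 0 < q -> 100 * (INR n + 2) ^ 2 <= sqrt q ->
  Rabs (a / (2 * sqrt q)) <= 1 ->
  Rabs ((a_rank q a n - ((5 - INR n) + (INR n - 1) * a - (INR n - 1) * q)) / (- 6 / sqrt q)
        - a / (2 * sqrt q))
  <= Delta2_error_const n / sqrt q.
Proof.
  intros hn hq hs hc.
  assert (hs0 : 0 < sqrt q) by (apply sqrt_lt_R0; exact hq).
  set (t := / sqrt q). set (A := a * t).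
  assert (ht : 0 < t) by (apply Rinv_0_lt_compat; exact hs0).
  assert (hqt : q = / t ^ 2)
    by (unfold t; rewrite pow_inv, Rinv_inv, <- Rsqr_pow2, Rsqr_sqrt; lra).
  assert (hat : a = A / t) by (unfold A; field; lra).
  assert (hA : Rabs A <= 2).
  { replace A with (2 * (a / (2 * sqrt q))) by (unfold A, t; field; lra).
    rewrite Rabs_mult, Rabs_pos_eq by lra. lra. }
  assert (hsmall : 100 * (INR n + 2) ^ 2 * t <= 1).
  { unfold t. apply (Rmult_le_reg_r (sqrt q)); [exact hs0|].
    rewrite Rmult_assoc, Rinv_l; lra. }
  destruct (ratio_dev_expansion n t A hn ht hsmall hA n (conj hn (le_n n))) as [_ hy].
  rewrite <- hqt, <- hat in hy.
  rewrite a_rank_ratio_dev by lra.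
  set (Y := ratio_dev q a n) in *.
  replace ((1 - q * Y - ((5 - INR n) + (INR n - 1) * a - (INR n - 1) * q))
           / (- 6 / sqrt q) - a / (2 * sqrt q))
    with ((Y - ratio_dev_model n t A) / (6 * t ^ 3)).
  2:{ replace (sqrt q) with (/ t) by (unfold t; apply Rinv_inv).
      rewrite hqt, hat. unfold ratio_dev_model. field. lra. }
  apply Rabs_div_le; [apply Rmult_lt_0_compat; [lra | apply pow_lt; lra]|].
  replace (Delta2_error_const n / sqrt q * (6 * t ^ 3)) with (ratio_dev_error n n t)
    by (unfold Delta2_error_const, ratio_dev_error, t; field; lra).
  exact hy.
Qed.

Lemma Delta2_near_cos_theta n E : (3 <= n)%nat -> forall h, 0 < h ->
  exists P0, forall p, (P0 <= p)%nat -> Rabs (ap E p / (2 * sqrt (INR p))) <= 1 ->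
    Rabs (Delta2 E n p - ap E p / (2 * sqrt (INR p))) <= h.
Proof.
  intros hn h hh.
  assert (hK : 0 < Delta2_error_const n).
  { pose proof (INR_ge_3 n hn). unfold Delta2_error_const. nra. }
  set (M := Rmax (100 * (INR n + 2) ^ 2) (Delta2_error_const n / h)).
  assert (hM1 : 100 * (INR n + 2) ^ 2 <= M) by apply Rmax_l.
  assert (hM2 : Delta2_error_const n / h <= M) by apply Rmax_r.
  assert (hM : 0 < M) by (pose proof (pos_INR n); nra).
  destruct (INR_unbounded (M ^ 2)) as [P0 hP0]. exists P0. intros p hp hc.
  assert (hPp : M ^ 2 <= INR p) by (pose proof (le_INR _ _ hp); lra).
  assert (hsp : M <= sqrt (INR p))
    by (rewrite <- (sqrt_pow2 M) by lra; apply sqrt_le_1_alt, hPp).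
  assert (hp0 : 0 < INR p) by (pose proof (pow_lt M 2 hM); lra).
  eapply Rle_trans; [apply normalized_a_rank_expansion; auto; lra|].
  apply (Rmult_le_reg_r (sqrt (INR p))); [lra|]. unfold Rdiv.
  rewrite Rmult_assoc, Rinv_l by lra.
  replace (Delta2_error_const n) with (Delta2_error_const n / h * h) by (field; lra). nra.
Qed.

Theorem theorem14 (n : nat) (E : weierstrass)
  (hn : (3 <= n)%nat)
  (hE : is_elliptic E)
  (hCM : no_CM E)
  (hST : sato_tate_law E)
  (alpha beta0 : R)
  (ha : 0 <= alpha) (hab : alpha < beta0) (hb : beta0 <= PI) :
  is_lim_seq (fun N => INR (count_Theta2 E n alpha beta0 N) / INR (prime_count N))
             (RInt (fun t => 2 / PI * (sin t) ^ 2) alpha beta0).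
Proof.
  (* hE and hCM enter only through the assumed Sato-Tate law hST. *)
  exact (acos_count_defined_equidistributed (good_prime E) (fun p => ap E p / (2 * sqrt (INR p)))
           (Delta2 E n) (fun N => INR (prime_count N)) prime_count_infty hST
           (Delta2_near_cos_theta n E hn) alpha beta0 ha hab hb).
Qed.
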